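(* Let $g=\begin{pmatrix}A&B\\C&D\end{pmatrix}\in SL_{2n+2}(\mathbb{C})$ with $A,B,C,D\in M_{n+1}(\mathbb{C})$ and $\det C\neq0$, acting on $\mathbb{P}^{2n+1}$. Then the pull-back of the volume form $dV$ satisfies $g^*dV=\mu_g^{4(n+1)}\,dV$, where $\mu_g(z)=\dfrac{\|z''\|}{\|Cz'+Dz''\|}$.
   Context: Write points of $\mathbb{P}^{2n+1}$ as $[z':z'']$ with $z'=(z^0,\dots,z^n)$, $z''=(z^{n+1},\dots,z^{2n+1})$; $\|\cdot\|$ is the Euclidean norm. Let $E=\mathbb{P}^{2n+1}\setminus\{z''=0\}$, covered by $U_\alpha=\{z^{n+\alpha}\neq0\}$, $1\leq\alpha\leq n+1$. On $U_\alpha$ use coordinates $\zeta_\alpha^j=z^j/z^{n+\alpha}$ ($0\le j\le n$), $x_\alpha^k=z^{n+k}/z^{n+\alpha}$ for $1\le k<\alpha$ and $x_\alpha^{k-1}=z^{n+k}/z^{n+\alpha}$ for $\alpha<k\le n+1$. Set $d\zeta_\alpha=d\zeta_\alpha^0\wedge\cdots\wedge d\zeta_\alpha^n$, $dx_\alpha=dx_\alpha^1\wedge\cdots\wedge dx_\alpha^n$, $\|x_\alpha\|^2=\sum_{k=1}^n|x_\alpha^k|^2$, and $dV=\sqrt{-1}(1+\|x_\alpha\|^2)^{-2(n+1)}d\zeta_\alpha\wedge\overline{d\zeta_\alpha}\wedge dx_\alpha\wedge\overline{dx_\alpha}$ on $U_\alpha$; these local forms agree on overlaps and define a global volume form $dV$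 on $E$. The identity is understood where both sides are defined. *)

From HB Require Import structures.
From mathcomp Require Import all_boot all_order all_algebra.
From mathcomp Require Import all_classical all_reals.
From mathcomp Require Import topology normedtype derive.
From mathcomp Require Import complex.

Set Implicit Arguments.
Unset Strict Implicit.
Unset Printing Implicit Defensive.

Import Order.TTheory GRing.Theory Num.Theory.
Local Open Scope ring_scope.

Section Defs.
Variables (R : realType) (n : nat).

(* Homogeneous coordinates z = [z' : z''] of P^{2n+1}, z' = (z^0..z^n),
   z'' = (z^{n+1}..z^{2n+1}); z' is indexed by lshift, z'' by rshift. *)
Definition hpoint := 'I_(n.+1 + n.+1) -> R[i].
Definition zp (z : hpoint) (j : 'I_n.+1) : R[i] := z (lshift n.+1 j).
Definition zpp (z : hpoint) (k : 'I_n.+1) : R[i] := z (rshift n.+1 k).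

Definition sqmod (c : R[i]) : R := complex.Re c ^+ 2 + complex.Im c ^+ 2.

Definition norm_zpp (z : hpoint) : R :=
  Num.sqrt (\sum_(k < n.+1) sqmod (zpp z k)).

Definition act (g : 'M[R[i]]_(n.+1 + n.+1)) (z : hpoint) : hpoint :=
  fun i => \sum_j g i j * z j.

Definition blkC (g : 'M[R[i]]_(n.+1 + n.+1)) : 'M[R[i]]_n.+1 :=
  \matrix_(i, j) g (rshift n.+1 i) (lshift n.+1 j).
Definition blkD (g : 'M[R[i]]_(n.+1 + n.+1)) : 'M[R[i]]_n.+1 :=
  \matrix_(i, j) g (rshift n.+1 i) (rshift n.+1 j).

Definition mu (g : 'M[R[i]]_(n.+1 + n.+1)) (z : hpoint) : R :=
  norm_zpp z /
  Num.sqrt (\sum_(i < n.+1)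
     sqmod (\sum_(j < n.+1) (blkC g i j * zp z j + blkD g i j * zpp z j))).

(* Affine chart U_alpha (alpha is 0-based here: paper's alpha = alpha+1).
   Complex chart coordinates: (zeta^0..zeta^n, x^1..x^n), indexed by
   'I_(n.+1 + n): zeta^j at lshift, x^{k+1} (0-based k) at rshift. *)
Definition ccoord := 'I_(n.+1 + n) -> R[i].

Definition xat (c : ccoord) (m : nat) : R[i] :=
  if @insub nat (fun m => m < n)%N 'I_n m is Some k then c (rshift n.+1 k)
  else 0.

Definition chart_inv (alpha : 'I_n.+1) (c : ccoord) : hpoint :=
  fun i => match fintype.split i with
  | inl j => c (lshift n j)
  | inr k =>
      if (k : nat) == alpha then 1
      else if (k < alpha)%N then xat c k
      else xat c k.-1
  end.

Definition chart (beta : 'I_n.+1) (z : hpoint) : ccoord :=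
  fun i => match fintype.split i with
  | inl j => zp z j / zpp z beta
  | inr k =>
      if (k < beta)%N then zpp z (inord k) / zpp z beta
      else zpp z (inord k.+1) / zpp z beta
  end.

(* Identification C^{2n+1} = R^{2(2n+1)}: real parts then imaginary parts. *)
Definition rcoord := 'rV[R]_((n.+1 + n) + (n.+1 + n)).
Definition cplx (w : rcoord) : ccoord :=
  fun k => Complex (w 0 (lshift _ k)) (w 0 (rshift _ k)).
Definition realify (c : ccoord) : rcoord :=
  \row_i match fintype.split i with inl k => complex.Re (c k) | inr k => complex.Im (c k) end.

(* density of dV w.r.t. the coordinate form sqrt(-1) dzeta^dzeta-bar^dx^dx-bar
   on U_alpha: (1 + ||x_alpha||^2)^{-2(n+1)} *)
Definition dens (w : rcoord) : R :=
  (1 + \sum_(k < n) sqmod (cplx w (rshift n.+1 k))) ^- (2 * n.+1).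

(* g in the charts: phi_beta o g o phi_alpha^{-1}, as a map R^{2(2n+1)} ->
   R^{2(2n+1)} (defined near points whose image lies in U_beta). *)
Definition gloc (g : 'M[R[i]]_(n.+1 + n.+1)) (alpha beta : 'I_n.+1)
  (w : rcoord) : rcoord :=
  realify (chart beta (act g (chart_inv alpha (cplx w)))).

End Defs.

From HB Require Import structures.
From mathcomp Require Import all_boot all_order all_algebra.
From mathcomp Require Import all_classical all_reals.
From mathcomp Require Import topology normedtype derive.
From mathcomp Require Import complex.
From mathcomp Require Import zify ring lra.
Import Order.TTheory GRing.Theory Num.Theory.
Import numFieldNormedType.Exports.
Local Open Scope ring_scope.

Set Implicit Arguments.
Unset Strict Implicit.
Unset Printing Implicit Defensive.

(* In the charts U_alpha (source) and U_beta (target), g reads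
   c |-> (y_l / y_beta)_l with y = g z(c), where z(c) is the point with
   z^{n+alpha} = 1 and remaining coordinates c.  This map is holomorphic, so
   its real Jacobian determinant is |det J|^2 for its complex Jacobian J, and
   replacing column alpha of g by y, then clearing that column by row
   operations, gives det g = +-y_beta^{2n+2} det J.  As z^{n+alpha} = 1, the
   densities are ||z''||^{-4(n+1)} at the source and
   (||y''|| / |y_beta|)^{-4(n+1)} at the target, so for det g = 1 both sides
   equal ||y''||^{-4(n+1)}.  The hypothesis det C <> 0 only ensures that g
   preserves E; the identity does not need it. *)

Section ComplexParts.
Variable R : realType.
Implicit Types u v : R[i].

Lemma Re_add u v : complex.Re (u + v) = complex.Re u + complex.Re v.
Proof. by case: u; case: v. Qed.
Lemma Im_add u v : complex.Im (u + v) = complex.Im u + complex.Im v.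
Proof. by case: u; case: v. Qed.
Lemma Re_opp u : complex.Re (- u) = - complex.Re u.
Proof. by case: u. Qed.
Lemma Im_opp u : complex.Im (- u) = - complex.Im u.
Proof. by case: u. Qed.
Lemma Re_mul u v :
  complex.Re (u * v) = complex.Re u * complex.Re v - complex.Im u * complex.Im v.
Proof. by case: u; case: v. Qed.
Lemma Im_mul u v :
  complex.Im (u * v) = complex.Re u * complex.Im v + complex.Im u * complex.Re v.
Proof. by case: u; case: v. Qed.
Lemma Re_inv u : complex.Re u^-1 = complex.Re u / sqmod u.
Proof. by case: u. Qed.
Lemma Im_inv u : complex.Im u^-1 = - (complex.Im u / sqmod u).
Proof. by case: u. Qed.

Lemma complex_ReIm_eq u v :
  complex.Re u = complex.Re v -> complex.Im u = complex.Im v -> u = v.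
Proof. by case: u; case: v => ? ? ? ? /= -> ->. Qed.

Lemma sqmod_ge0 u : 0 <= sqmod u.
Proof. by rewrite /sqmod addr_ge0 ?sqr_ge0. Qed.

Lemma sqmod_eq0 u : (sqmod u == 0) = (u == 0).
Proof.
case: u => a b; rewrite /sqmod /= paddr_eq0 ?sqr_ge0 // !sqrf_eq0.
by rewrite eq_complex.
Qed.

Lemma sqmod_gt0 u : u != 0 -> 0 < sqmod u.
Proof. by rewrite lt_def sqmod_eq0 sqmod_ge0 andbT. Qed.

Lemma sqmod1 : sqmod (1 : R[i]) = 1.
Proof. by rewrite /sqmod /=; ring. Qed.

Lemma sqmodM u v : sqmod (u * v) = sqmod u * sqmod v.
Proof. by case: u => a b; case: v => c d; rewrite /sqmod /=; ring. Qed.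

Lemma sqmodX u k : sqmod (u ^+ k) = sqmod u ^+ k.
Proof. by elim: k => [|k IH]; rewrite ?sqmod1 // !exprS sqmodM IH. Qed.

Lemma sqmod_sign k : sqmod ((-1) ^+ k : R[i]) = 1.
Proof. by rewrite sqmodX (_ : sqmod (-1) = 1) ?expr1n // /sqmod /=; ring. Qed.

Lemma sqmodV u : sqmod u^-1 = (sqmod u)^-1.
Proof.
have [->|u0] := eqVneq u 0; first by rewrite invr0 /sqmod /= !expr2 !mul0r addr0 invr0.
have := sqmod_gt0 u0; rewrite lt0r => /andP[su0 _].
by move: su0; case: u {u0} => a b; rewrite /sqmod /= => su0; field.
Qed.

End ComplexParts.

Section RealDifferentials.
Variable R : realType.

Lemma is_diff_ext (V W : normedModType R) (f f' df df' : V -> W) x :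
  f =1 f' -> df =1 df' -> is_diff x f df -> is_diff x f' df'.
Proof. by move=> /funext <- /funext <-. Qed.

Lemma is_diff_coord p (i : 'I_p) (y0 : 'rV[R]_p) :
  is_diff y0 (fun y : 'rV[R]_p => y 0 i) (fun y => y 0 i).
Proof.
have @f : {linear 'rV[R]_p -> R}.
  by exists (fun y : 'M[R]_(_, _) => y 0 i); do 2![eexists]; do ?[constructor];
     rewrite ?mxE// => ? *; rewrite ?mxE//; move=> ?; rewrite !mxE.
rewrite (_ : (fun _ => _) = f) //; apply: DiffDef.
  exact/linear_differentiable/coord_continuous.
by rewrite diff_lin //; apply: coord_continuous.
Qed.

Lemma is_diff_sum (V W : normedModType R) (I : Type) (s : seq I)
    (f df : I -> V -> W) x :
  (forall i, is_diff x (f i) (df i)) ->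
  is_diff x (fun y => \sum_(i <- s) f i y) (fun v => \sum_(i <- s) df i v).
Proof.
move=> h; elim: s => [|i s IH].
  by apply: is_diff_ext (is_diff_cst 0 x) => y; rewrite big_nil.
by apply: is_diff_ext (is_diffD (h i) IH) => y; rewrite big_cons.
Qed.

Lemma is_diffZl (V W : normedModType R) (k dk : V -> R) (u : W) x :
  is_diff x k dk -> is_diff x (fun y => k y *: u) (fun v => dk v *: u).
Proof.
move=> hk; apply: DiffDef; first exact: differentiableZl.
by rewrite diffZl ?diff_val.
Qed.

End RealDifferentials.

Section HolomorphicJacobian.
Variables (R : realType) (m : nat).
Local Notation rV := 'rV[R]_(m + m).
Implicit Types (w x v : rV) (a c : 'I_m -> R[i]).

Definition cvec v : 'I_m -> R[i] :=
  fun k => Complex (v 0 (lshift m k)) (v 0 (rshift m k)).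

Definition rvec c : rV :=
  \row_i match fintype.split i with
         | inl k => complex.Re (c k) | inr k => complex.Im (c k) end.

Lemma rvecK : cancel rvec cvec.
Proof.
move=> c; apply/funext => k; rewrite /cvec !mxE.
by rewrite (unsplitK (inl _ k)) (unsplitK (inr _ k)); case: (c k).
Qed.

Definition cdot a c : R[i] := \sum_k a k * c k.

Lemma cdotC a c : cdot a c = cdot c a.
Proof. by apply: eq_bigr => k _; rewrite mulrC. Qed.

Lemma cdotDl a b c : cdot (fun k => a k + b k) c = cdot a c + cdot b c.
Proof. by rewrite /cdot -big_split; apply: eq_bigr => k _; rewrite mulrDl. Qed.

Lemma cdotZl u a c : cdot (fun k => u * a k) c = u * cdot a c.
Proof. by rewrite /cdot mulr_sumr; apply: eq_bigr => k _; rewrite mulrA. Qed.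

Lemma cdot_delta a k : cdot a (fun j => (j == k)%:R) = a k.
Proof.
rewrite /cdot (bigD1 k) //= eqxx mulr1 big1 ?addr0 // => j /negbTE ->.
by rewrite mulr0.
Qed.

(* [f] is holomorphic at [w] in the coordinates [cvec], with gradient [a]. *)
Definition is_cgrad w (f : rV -> R[i]) a : Prop :=
  is_diff w (fun x => complex.Re (f x)) (fun v => complex.Re (cdot a (cvec v))) /\
  is_diff w (fun x => complex.Im (f x)) (fun v => complex.Im (cdot a (cvec v))).

Lemma is_cgrad_ext w f f' a a' :
  f =1 f' -> a =1 a' -> is_cgrad w f a -> is_cgrad w f' a'.
Proof. by move=> /funext <- /funext <-. Qed.

Lemma is_cgrad_cst w (b : R[i]) : is_cgrad w (fun _ => b) (fun _ => 0).
Proof.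
have cdot0 c : cdot (fun _ => 0) c = 0.
  by rewrite /cdot big1 // => k _; rewrite mul0r.
by split; apply: is_diff_eq (is_diff_cst _ w) _; apply/funext => v; rewrite cdot0.
Qed.

Lemma is_cgrad_coord w k : is_cgrad w (fun x => cvec x k) (fun j => (j == k)%:R).
Proof.
by split; apply: is_diff_ext (is_diff_coord _ w) => // v; rewrite cdotC cdot_delta.
Qed.

Lemma is_cgradD w f g a b : is_cgrad w f a -> is_cgrad w g b ->
  is_cgrad w (fun x => f x + g x) (fun k => a k + b k).
Proof.
move=> [fr fi] [gr gi]; split.
  by apply: is_diff_ext (is_diffD fr gr) => [x|v]; rewrite ?cdotDl Re_add.
by apply: is_diff_ext (is_diffD fi gi) => [x|v]; rewrite ?cdotDl Im_add.
Qed.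

Lemma is_cgradM w f g a b : is_cgrad w f a -> is_cgrad w g b ->
  is_cgrad w (fun x => f x * g x) (fun k => f w * b k + g w * a k).
Proof.
move=> [fr fi] [gr gi]; split.
  apply: is_diff_ext (is_diffB (is_diffM fr gr) (is_diffM fi gi)) => [x|v].
    by rewrite Re_mul.
  by rewrite cdotDl !cdotZl /= Re_add !Re_mul !fctE /=; rewrite /GRing.scale /=; lra.
apply: is_diff_ext (is_diffD (is_diffM fr gi) (is_diffM fi gr)) => [x|v].
  by rewrite Im_mul.
by rewrite cdotDl !cdotZl /= Im_add !Im_mul !fctE /=; rewrite /GRing.scale /=; lra.
Qed.

Lemma is_cgradV w f a : is_cgrad w f a -> f w != 0 ->
  is_cgrad w (fun x => (f x)^-1) (fun k => - (f w ^+ 2)^-1 * a k).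
Proof.
move=> [fr fi] fw0.
pose s x := complex.Re (f x) * complex.Re (f x) + complex.Im (f x) * complex.Im (f x).
have sE x : sqmod (f x) = s x by rewrite /sqmod !expr2.
have sw0 : sqmod (f w) != 0 by rewrite sqmod_eq0.
have ds := is_diffD (is_diffM fr fr) (is_diffM fi fi).
have dsV : is_diff w (fun x => (s x)^-1) (- (s w) ^- 2 \*: 'd s w).
  by apply: DiffDef; [apply: differentiableV | rewrite diffV]; rewrite -?sE.
rewrite (@diff_val _ _ _ _ _ _ _ ds) in dsV.
split.
  apply: is_diff_ext (is_diffM fr dsV) => [x|v]; first by rewrite Re_inv sE.
  rewrite cdotZl !fctE /= -sE Re_mul Re_opp Im_opp Re_inv Im_inv sqmodX.
  move: sw0; rewrite /sqmod !expr2; case: (f w) => p q /=; rewrite /GRing.scale /=.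
  by case: (cdot a (cvec v)) => du dv /= *; field.
apply: is_diff_ext (is_diffN (is_diffM fi dsV)) => [x|v]; first by rewrite Im_inv sE.
rewrite cdotZl !fctE /= -sE Im_mul Re_opp Im_opp Re_inv Im_inv sqmodX.
move: sw0; rewrite /sqmod !expr2; case: (f w) => p q /=; rewrite /GRing.scale /=.
by case: (cdot a (cvec v)) => du dv /= *; field.
Qed.

Lemma is_cgrad_sum w (I : Type) (r : seq I) (f : I -> rV -> R[i])
    (a : I -> 'I_m -> R[i]) :
  (forall i, is_cgrad w (f i) (a i)) ->
  is_cgrad w (fun x => \sum_(i <- r) f i x) (fun k => \sum_(i <- r) a i k).
Proof.
move=> h; elim: r => [|i r IH].
  by apply: is_cgrad_ext (is_cgrad_cst w 0) => [x|k]; rewrite big_nil.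
by apply: is_cgrad_ext (is_cgradD (h i) IH) => [x|k]; rewrite big_cons.
Qed.

Lemma is_cgrad_cdot w a : is_cgrad w (fun x => cdot a (cvec x)) a.
Proof.
have h k : is_cgrad w (fun x => a k * cvec x k)
    (fun j => a k * (j == k)%:R + cvec w k * 0).
  exact: is_cgradM (is_cgrad_cst w (a k)) (is_cgrad_coord w k).
apply: is_cgrad_ext (is_cgrad_sum (index_enum 'I_m) h) => // j.
rewrite -[RHS](cdot_delta a j); apply: eq_bigr => k _.
by rewrite mulr0 addr0 eq_sym.
Qed.

End HolomorphicJacobian.

Section Realification.
Variables (R : realType) (m : nat).

(* Matrix of [v |-> v *m X] on C^m = R^m x R^m, in the basis (e_k, i e_k). *)
Definition realmat (X : 'M[R[i]]_m) : 'M[R]_(m + m) :=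
  \matrix_(i, j) match fintype.split i, fintype.split j with
  | inl k, inl l => complex.Re (X k l)
  | inl k, inr l => complex.Im (X k l)
  | inr k, inl l => - complex.Im (X k l)
  | inr k, inr l => complex.Re (X k l) end.

Lemma cvec_delta_lshift (k : 'I_m) :
  cvec (delta_mx 0 (lshift m k) : 'rV[R]_(m + m)) = fun j => (j == k)%:R.
Proof.
apply/funext => j; rewrite /cvec !mxE eqxx /=.
rewrite (inj_eq (@lshift_inj _ _)) eq_rlshift.
by case: (j == k); rewrite /= complexr0 ?rmorph1 ?rmorph0.
Qed.

Lemma cvec_delta_rshift (k : 'I_m) :
  cvec (delta_mx 0 (rshift m k) : 'rV[R]_(m + m)) = fun j => 'i * (j == k)%:R.
Proof.
apply/funext => j; rewrite /cvec !mxE eqxx /=.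
rewrite (inj_eq (@rshift_inj _ _)) eq_lrshift.
by case: (j == k); rewrite ?mulr1 ?mulr0.
Qed.

Lemma jacobian_holomorphic (F : 'rV[R]_(m + m) -> 'rV[R]_(m + m))
    (f : 'I_m -> 'rV[R]_(m + m) -> R[i]) (A : 'I_m -> 'I_m -> R[i]) w :
  (forall x, F x = rvec (fun l => f l x)) -> (forall l, is_cgrad w (f l) (A l)) ->
  'J F w = realmat (\matrix_(k, l) A l k).
Proof.
move=> Fdef fA.
pose dF j v := match fintype.split j with
  | inl l => complex.Re (cdot (A l) (cvec v))
  | inr l => complex.Im (cdot (A l) (cvec v)) end.
have dFj j : is_diff w (fun x => F x 0 j) (dF j).
  have h : is_diff w (fun x => match fintype.split j with
      | inl l => complex.Re (f l x) | inr l => complex.Im (f l x) end) (dF j).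
    by rewrite /dF; case: (fintype.split j) => l; [exact: (fA l).1 | exact: (fA l).2].
  by apply: is_diff_ext h => // x; rewrite Fdef mxE.
have dF_F : is_diff w F (fun v => \sum_j dF j v *: (delta_mx 0 j : 'rV[R]_(m + m))).
  apply: is_diff_ext (is_diff_sum _ (fun j => is_diffZl (delta_mx 0 j) (dFj j))) => //.
  by move=> x; rewrite [RHS]row_sum_delta.
rewrite /jacobian (@diff_val _ _ _ _ _ _ _ dF_F); apply/matrixP => i j.
rewrite !mxE summxE (bigD1 j) //= big1 ?addr0; last first.
  by move=> k /negbTE hk; rewrite !mxE eq_sym hk andbF mulr0.
rewrite !mxE !eqxx mulr1 /dF -[in delta_mx 0 i](splitK i).
case: (fintype.split i) => k /=.
  by rewrite cvec_delta_lshift; case: (fintype.split j) => l; rewrite mxE cdot_delta.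
rewrite cvec_delta_rshift; case: (fintype.split j) => l;
  by rewrite mxE cdotC cdotZl cdotC cdot_delta mulrC ?ReiNIm ?ImiRe.
Qed.

(* Over C, [[Xr, Xi], [-Xi, Xr]] is conjugate by unipotent block matrices to
   the block triangular [[conj X, 0], [-Xi, X]]. *)
Lemma det_realmat (X : 'M[R[i]]_m) : \det (realmat X) = sqmod (\det X).
Proof.
pose Xr := map_mx (fun u : R[i] => real_complex R (complex.Re u)) X.
pose Xi := map_mx (fun u : R[i] => real_complex R (complex.Im u)) X.
have XC : map_mx (real_complex R) (realmat X) = block_mx Xr Xi (- Xi) Xr.
  apply/matrixP => i j; rewrite -(splitK i) -(splitK j).
  case: (fintype.split i) => k; case: (fintype.split j) => l;
    by rewrite ?block_mxEul ?block_mxEur ?block_mxEdl ?block_mxEdr !mxE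
       ?(unsplitK (inl _ _)) ?(unsplitK (inr _ _)) ?rmorphN.
pose P := block_mx (1%:M : 'M[R[i]]_m) ('i%C%:M) 0 1%:M.
pose Q := block_mx (1%:M : 'M[R[i]]_m) ((- 'i%C)%:M) 0 1%:M.
have detP : \det P = 1 by rewrite det_ublock !det1 mulr1.
have detQ : \det Q = 1 by rewrite det_ublock !det1 mulr1.
have PXQ : P *m block_mx Xr Xi (- Xi) Xr *m Q = block_mx (map_mx conjc X) 0 (- Xi) X.
  rewrite !mulmx_block !mul1mx !mul0mx !mulmx1 !mulmx0 !mul_scalar_mx !mul_mx_scalar.
  rewrite !add0r !addr0; congr block_mx; apply/matrixP => i j; rewrite !mxE;
    by case: (X i j) => a b; apply: complex_ReIm_eq; rewrite /=; ring.
have := congr1 determinant PXQ.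
rewrite !det_mulmx detP detQ mul1r mulr1 det_lblock det_map_mx -XC det_map_mx.
case: (\det X) => a b /= h; apply: complexI; rewrite h /sqmod.
by apply: complex_ReIm_eq; rewrite /=; ring.
Qed.

End Realification.

Lemma det_id_col (K : comNzRingType) m (v : 'I_m -> K) (a : 'I_m) :
  \det (\matrix_(i, j) if j == a then v i else (i == j)%:R) = v a.
Proof.
rewrite (expand_det_row _ a) (bigD1 a) //= big1 ?addr0; last first.
  by move=> j /negbTE ja; rewrite !mxE ja eq_sym ja mul0r.
rewrite /cofactor -signr_odd addnn odd_double mul1r !mxE eqxx -[RHS]mulr1.
congr (_ * _); rewrite -[RHS](det1 _ m.-1); congr determinant; apply/matrixP => p q.
by rewrite !mxE lift_eqF (inj_eq (@lift_inj _ a)).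
Qed.

Section QuotientJacobian.
Variables (K : fieldType) (m : nat) (g : 'M[K]_m) (a b : 'I_m) (z : 'I_m -> K).
Let y i := \sum_j g i j * z j.

(* Entry [(l, k)] is the derivative of [y (lift b l) / y b] with respect to
   [z (lift a k)]. *)
Definition quot_jac : 'M[K]_m.-1 :=
  \matrix_(l, k) ((y b * g (lift b l) (lift a k) - y (lift b l) * g b (lift a k))
                  / y b ^+ 2).

(* Right multiplication by [T] replaces column [a] of [g] by [y] (as
   [z a = 1]); the row operations [S] clear that column outside row [b], and
   the remaining minor is [y b *: quot_jac]. *)
Lemma det_quot_jac : z a = 1 -> y b != 0 ->
  \det g = (-1) ^+ (a + b) * y b ^+ m * \det quot_jac.
Proof.
move=> za yb0.
pose T : 'M[K]_m := \matrix_(i, j) if j == a then z i else (i == j)%:R.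
pose c i := if i == b then 1 else - (y i / y b).
pose S : 'M[K]_m := \matrix_(i, j) if j == b then c i else (i == j)%:R.
pose M := S *m (g *m T).
have gT i j : (g *m T) i j = if j == a then y i else g i j.
  rewrite mxE; case: eqP => [->|/eqP ja].
    by apply: eq_bigr => k _; rewrite mxE eqxx.
  rewrite (bigD1 j) //= big1 ?addr0 => [|k /negbTE kj]; rewrite !mxE (negbTE ja).
    by rewrite eqxx mulr1.
  by rewrite kj mulr0.
have ME i j : M i j =
    if i == b then (g *m T) b j else (g *m T) i j - y i / y b * (g *m T) b j.
  rewrite mxE (bigD1 b) //= mxE eqxx /c.
  have [->|ib] := eqVneq i b.
    rewrite mul1r big1 ?addr0 // => k /negbTE kb.
    by rewrite mxE kb eq_sym kb mul0r.
  rewrite (bigD1 i) //= big1 ?addr0 => [|k /andP[kb ki]].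
    by rewrite !mxE (negbTE ib) eqxx mul1r mulNr addrC.
  by rewrite mxE (negbTE kb) eq_sym (negbTE ki) mul0r.
have -> : \det g = \det M by rewrite !det_mulmx !det_id_col za /c eqxx mul1r mulr1.
rewrite (expand_det_col _ a) (bigD1 b) //= big1 ?addr0; last first.
  by move=> i /negbTE ib; rewrite ME !gT eqxx ib divfK // subrr mul0r.
rewrite ME gT !eqxx /cofactor.
have -> : row' b (col' a M) = y b *: quot_jac.
  apply/matrixP => l k; rewrite 2![LHS]mxE ME !gT !lift_eqF !mxE.
  by field.
have m_gt0 : (0 < m)%N := leq_ltn_trans (leq0n a) (ltn_ord a).
have -> : y b ^+ m = y b * y b ^+ m.-1 by rewrite -exprS prednK.
by rewrite detZ addnC; ring.
Qed.

End QuotientJacobian.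

Lemma det_trmx_cast (K : comNzRingType) p q (e : p = q) (A : 'M[K]_q) :
  \det (\matrix_(i, j) A (cast_ord e j) (cast_ord e i)) = \det A.
Proof.
case: q / e A => A; rewrite -det_tr; congr determinant; apply/matrixP => i j.
by rewrite !mxE !cast_ord_id.
Qed.

Lemma bumpE h i : bump h i = (if (h <= i)%N then i.+1 else i).
Proof. by rewrite /bump; case: ifP. Qed.

Section Charts.
Variables (R : realType) (n : nat).
Local Notation N := (n.+1 + n)%N.
Implicit Types (alpha beta : 'I_n.+1) (c : ccoord R n) (y z : hpoint R n).

(* Chart coordinate [l] of U_beta is the homogeneous coordinate
   [lift (rshift n.+1 beta) (chart_cast l)]: the [l]-th one once z^{n+beta}
   is deleted (see [chart_lift] and [chart_inv_lift]). *)
Definition chart_cast : 'I_N -> 'I_(n + n.+1) := cast_ord (esym (addnS n n)).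

Lemma val_lift_chart_cast a k :
  lift (rshift n.+1 a) (chart_cast k) = bump (n.+1 + a) k :> nat.
Proof. by []. Qed.

Lemma xatE c m (m_lt : (m < n)%N) : xat c m = c (rshift n.+1 (Ordinal m_lt)).
Proof. by rewrite /xat insubT. Qed.

Lemma chart_inv_alpha alpha c : chart_inv alpha c (rshift n.+1 alpha) = 1.
Proof. by rewrite /chart_inv (unsplitK (inr _ alpha)) eqxx. Qed.

Lemma chart_inv_lift alpha c k :
  chart_inv alpha c (lift (rshift n.+1 alpha) (chart_cast k)) = c k.
Proof.
move: (ltn_ord alpha) (ltn_ord k) => alpha_lt k_lt.
rewrite /chart_inv; case: splitP => j; rewrite val_lift_chart_cast bumpE => jE.
  move: (ltn_ord j) => j_lt; congr c; apply: ord_inj => /=.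
  by move: jE; case: ifP; lia.
move: (ltn_ord j) jE => j_lt; case: ifP => h jE.
  have -> : ((j : nat) == alpha) = false by apply/eqP; lia.
  have -> : ((j : nat) < alpha)%N = false by apply/negbTE; rewrite -leqNgt; lia.
  have jn : (j.-1 < n)%N by lia.
  by rewrite (xatE _ jn); congr c; apply: ord_inj => /=; lia.
have -> : ((j : nat) == alpha) = false by apply/eqP; lia.
have -> : ((j : nat) < alpha)%N by lia.
have jn : (j < n)%N by lia.
by rewrite (xatE _ jn); congr c; apply: ord_inj => /=; lia.
Qed.

Lemma chart_lift beta y l :
  chart beta y l = y (lift (rshift n.+1 beta) (chart_cast l)) / y (rshift n.+1 beta).
Proof.
move: (ltn_ord beta) (ltn_ord l) => beta_lt l_lt.
rewrite /chart /zp /zpp; case: splitP => j lE.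
  move: (ltn_ord j) => j_lt; congr (y _ / _); apply: ord_inj.
  by rewrite val_lift_chart_cast bumpE /=; case: ifP; lia.
move: (ltn_ord j) => j_lt.
case: ifP => h; congr (y _ / _); apply: ord_inj;
  by rewrite val_lift_chart_cast bumpE /= inordK; [case: ifP; lia | lia].
Qed.

Lemma lift_rshift a (k : 'I_n) :
  lift (rshift n.+1 a) (chart_cast (rshift n.+1 k)) = rshift n.+1 (lift a k).
Proof.
move: (ltn_ord a) (ltn_ord k) => a_lt k_lt.
by apply: ord_inj; rewrite val_lift_chart_cast /= !bumpE; case: ifP; case: ifP; lia.
Qed.

Lemma sum_lift (V : nmodType) a (F : 'I_(n.+1 + n.+1) -> V) :
  \sum_j F j = F (rshift n.+1 a) + \sum_(k < N) F (lift (rshift n.+1 a) (chart_cast k)).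
Proof.
rewrite (bigD1_ord (rshift n.+1 a)) //=; congr (_ + _).
rewrite (reindex chart_cast) //; exists (cast_ord (addnS n n)) => k _.
  exact: cast_ordKV.
exact: cast_ordK.
Qed.

End Charts.

Section Densities.
Variables (R : realType) (n : nat).
Implicit Types (alpha beta : 'I_n.+1) (y z : hpoint R n).

Definition sqnorm_zpp z : R := \sum_k sqmod (zpp z k).

Lemma sqnorm_zpp_ge0 z : 0 <= sqnorm_zpp z.
Proof. by apply: sumr_ge0 => k _; apply: sqmod_ge0. Qed.

Lemma sqnorm_zpp_lift beta z :
  sqnorm_zpp z = sqmod (zpp z beta) + \sum_(k < n) sqmod (zpp z (lift beta k)).
Proof. exact: bigD1_ord. Qed.

Lemma sqnorm_zpp_neq0 beta z :
  zpp z beta != 0 -> sqnorm_zpp z != 0.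
Proof.
move=> zb0; rewrite (sqnorm_zpp_lift beta) gt_eqF // ltr_pwDl ?sqmod_gt0 //.
by apply: sumr_ge0 => k _; apply: sqmod_ge0.
Qed.

Lemma dens_chart beta y : zpp y beta != 0 ->
  dens (realify (chart beta y)) = (sqnorm_zpp y / sqmod (zpp y beta)) ^- (2 * n.+1).
Proof.
move=> yb0; have sb0 : sqmod (zpp y beta) != 0 by rewrite sqmod_eq0.
rewrite /dens; have -> : cplx (realify (chart beta y)) = chart beta y := rvecK _.
rewrite (sqnorm_zpp_lift beta) mulrDl divff //; congr ((1 + _) ^- _).
rewrite mulr_suml; apply: eq_bigr => k _.
by rewrite chart_lift lift_rshift sqmodM sqmodV.
Qed.

Lemma dens_chart_inv alpha w :
  dens w = sqnorm_zpp (chart_inv alpha (cplx w)) ^- (2 * n.+1).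
Proof.
rewrite /dens (sqnorm_zpp_lift alpha) /zpp chart_inv_alpha sqmod1.
congr ((1 + _) ^- _); apply: eq_bigr => k _.
by rewrite -lift_rshift chart_inv_lift.
Qed.

Lemma mu_sqr (g : 'M[R[i]]_(n.+1 + n.+1)) z :
  mu g z ^+ 2 = sqnorm_zpp z / sqnorm_zpp (act g z).
Proof.
rewrite /mu /norm_zpp expr_div_n.
have -> : \sum_(i < n.+1) sqmod (\sum_j (blkC g i j * zp z j + blkD g i j * zpp z j))
    = sqnorm_zpp (act g z).
  apply: eq_bigr => i _; congr sqmod; rewrite /zpp /act big_split_ord big_split.
  by congr (_ + _); apply: eq_bigr => j _; rewrite !mxE.
by rewrite !sqr_sqrtr ?sqnorm_zpp_ge0.
Qed.

End Densities.

Section ChartExpression.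
Variables (R : realType) (n : nat) (g : 'M[R[i]]_(n.+1 + n.+1)) (alpha beta : 'I_n.+1).
Local Notation a' := (rshift n.+1 alpha).
Local Notation b' := (rshift n.+1 beta).
Local Notation F l x := (chart beta (act g (chart_inv alpha (cplx x))) l).

Lemma is_cgrad_act w i :
  is_cgrad w (fun x => act g (chart_inv alpha (cplx x)) i)
    (fun k => g i (lift a' (chart_cast k))).
Proof.
apply: is_cgrad_ext (is_cgradD (is_cgrad_cst w (g i a')) (is_cgrad_cdot w _)) => [x|k].
  rewrite /act (sum_lift alpha) chart_inv_alpha mulr1; congr (_ + _).
  by apply: eq_bigr => k _; rewrite chart_inv_lift.
by rewrite add0r.
Qed.

Lemma is_cgrad_chart w l :
  let z := chart_inv alpha (cplx w) in zpp (act g z) beta != 0 ->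
  is_cgrad w (fun x => F l x) (fun k => quot_jac g a' b' z (chart_cast l) (chart_cast k)).
Proof.
move=> z yb0.
have := is_cgradM (is_cgrad_act w (lift b' (chart_cast l)))
                  (is_cgradV (is_cgrad_act w b') yb0).
apply: is_cgrad_ext => [x|k]; first by rewrite chart_lift.
by rewrite mxE -/z; move: yb0; rewrite /zpp /act => yb0; field.
Qed.

Lemma jacobian_gloc w :
  let z := chart_inv alpha (cplx w) in zpp (act g z) beta != 0 ->
  'J (gloc g alpha beta) w
  = realmat (\matrix_(k, l) quot_jac g a' b' z (chart_cast l) (chart_cast k)).
Proof.
move=> z yb0; apply: (jacobian_holomorphic (f := fun l x => F l x)) => // l.
exact: is_cgrad_chart.
Qed.

Lemma det_jacobian_gloc w :
  let y := act g (chart_inv alpha (cplx w)) in zpp y beta != 0 ->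
  \det ('J (gloc g alpha beta) w) = sqmod (\det g) / sqmod (zpp y beta) ^+ (2 * n.+1).
Proof.
move=> y yb0; rewrite jacobian_gloc // det_realmat det_trmx_cast.
have sb0 : sqmod (zpp y beta) ^+ (n.+1 + n.+1) != 0 by rewrite expf_neq0 // sqmod_eq0.
rewrite (det_quot_jac (chart_inv_alpha alpha (cplx w)) yb0) !sqmodM sqmod_sign sqmodX.
by rewrite mul2n -addnn mul1r mulrAC divff ?mul1r.
Qed.

End ChartExpression.

Theorem lemma7p2 (R : realType) (n : nat) (g : 'M[R[i]]_(n.+1 + n.+1)) :
  \det g = 1 -> \det (blkC g) != 0 ->
  forall (alpha beta : 'I_n.+1) (w : rcoord R n),
    zpp (act g (chart_inv alpha (cplx w))) beta != 0 ->
    dens (gloc g alpha beta w) * \det ('J (gloc g alpha beta) w)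
    = mu g (chart_inv alpha (cplx w)) ^+ (4 * n.+1) * dens w.
Proof.
move=> det_g _ alpha beta w yb0.
set z := chart_inv alpha (cplx w); set y := act g z.
have za0 : zpp z alpha != 0 by rewrite /zpp /z chart_inv_alpha oner_eq0.
have Sz0 := sqnorm_zpp_neq0 za0; have Sy0 := sqnorm_zpp_neq0 yb0.
have sb0 : sqmod (zpp y beta) != 0 by rewrite sqmod_eq0.
rewrite (det_jacobian_gloc yb0) det_g sqmod1 (dens_chart yb0) (dens_chart_inv alpha).
rewrite (_ : 4 * n.+1 = 2 * (2 * n.+1))%N; last by rewrite mulnA.
rewrite [mu _ _ ^+ _]exprM mu_sqr -/z -/y !expr_div_n.
by field; rewrite !expf_neq0.
Qed.
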